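(* Let $A$ be a unital C*-algebra with unit $1_A$, let $P$ be a (right-reversible) Ore semigroup with identity $e$ and enveloping group $G = P^{-1}P$, and let $\alpha: P \to \mathrm{End}(A)$ be an action of $P$ on $A$ by injective unital-or-not endomorphisms $\alpha_p$, $p\in P$, with $\alpha_e=\mathrm{id}$. Let $(B, G, \beta)$ together with the injective $*$-homomorphism $\iota: A \to B$ be the minimal automorphic dilation of $(A,P,\alpha)$, i.e. $\beta$ is an action of $G$ on the C*-algebra $B$ by automorphisms with $\beta_p\circ\iota = \iota\circ\alpha_p$ for all $p\in P$ and $\bigcup_{p\in P}\beta_p^{-1}(\iota(A))$ dense in $B$. Let $u_g$, $g\in G$, be the unitaries in the multiplier algebra of the crossed product $B\rtimes_\beta G$ implementing $\beta$ (so $u_g b u_g^* = \beta_g(b)$). Then the net $(u_p^*\,\iota(1_A)\,u_p)_{p\in P}$, indexed by $P$ directed by the preorder $p\le r \iff r\in Pp$, is an approximate unit for $B$.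
   Context: A (right-reversible) Ore semigroup is a cancellative semigroup $P$ with $Ps\cap Pt\neq\emptyset$ for all $s,t\in P$; such $P$ embeds in a group $G$ with $G=P^{-1}P$ (the enveloping group, unique up to isomorphism). The preorder $p\le r$ iff $r\in Pp$ makes $P$ a directed set. For such a system with injective endomorphisms, a minimal automorphic dilation $(B,G,\beta,\iota)$ as described exists and is unique up to isomorphism (Laca). Note $u_p^*\iota(1_A)u_p=\beta_p^{-1}(\iota(1_A))\in B$. *)

From HB Require Import structures.
From mathcomp Require Import all_boot all_order all_algebra.
From mathcomp Require Import reals.
From mathcomp Require Import complex.
Set Implicit Arguments. Unset Strict Implicit. Unset Printing Implicit Defensive.
Import Order.TTheory GRing.Theory Num.Theory.
Local Open Scope ring_scope.
Local Open Scope complex_scope.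

Section CStarDefs.
Variable R : realType.

Definition is_cstar (V : lmodType R[i]) (mul : V -> V -> V) (star : V -> V)
    (nrm : V -> R) : Prop :=
  [/\
      [/\ (forall x y z, mul x (mul y z) = mul (mul x y) z),
      (forall x y z, mul (x + y) z = mul x z + mul y z),
      (forall x y z, mul x (y + z) = mul x y + mul x z) &
      (forall (a : R[i]) x y, mul (a *: x) y = a *: mul x y
                              /\ mul x (a *: y) = a *: mul x y)],
      [/\ (forall x, star (star x) = x),
          (forall x y, star (x + y) = star x + star y),
          (forall (a : R[i]) x, star (a *: x) = (a ^*)%C *: star x) &
          (forall x y, star (mul x y) = mul (star y) (star x))],
      [/\ (forall x, nrm x = 0 -> x = 0),
          (forall x, 0 <= nrm x),
          (forall x y, nrm (x + y) <= nrm x + nrm y),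
          (forall (a : R[i]) x, nrm (a *: x) = ComplexField.Normc.normc a * nrm x) &
          (forall x y, nrm (mul x y) <= nrm x * nrm y)],
      (forall u : nat -> V,
         (forall eps : R, 0 < eps -> exists N : nat, forall m n : nat,
             (N <= m)%N -> (N <= n)%N -> nrm (u m - u n) < eps) ->
         exists l : V, forall eps : R, 0 < eps -> exists N : nat,
             forall n : nat, (N <= n)%N -> nrm (u n - l) < eps) &
      (forall x, nrm (mul (star x) x) = nrm x ^+ 2)].

Record cstar := CStar {
  cs_car :> lmodType R[i];
  cs_mul : cs_car -> cs_car -> cs_car;
  cs_star : cs_car -> cs_car;
  cs_norm : cs_car -> R;
  cs_ax : is_cstar cs_mul cs_star cs_norm }.

Definition is_starhom (A B : cstar) (f : A -> B) : Prop :=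
  [/\ (forall x y, f (x + y) = f x + f y),
      (forall (a : R[i]) x, f (a *: x) = a *: f x),
      (forall x y, f (cs_mul x y) = cs_mul (f x) (f y)) &
      (forall x, f (cs_star x) = cs_star (f x))].

Definition is_starauto (B : cstar) (f : B -> B) : Prop :=
  is_starhom f /\ bijective f.

Definition cs_pos (B : cstar) (a : B) : Prop :=
  exists x : B, a = cs_mul (cs_star x) x.
Definition cs_le (B : cstar) (a b : B) : Prop := cs_pos (b - a).

Definition approx_unit (B : cstar) (I : Type) (le : I -> I -> Prop)
    (e : I -> B) : Prop :=
  [/\ (forall i, cs_pos (e i) /\ cs_norm (e i) <= 1),
      (forall i j, le i j -> cs_le (e i) (e j)) &
      (forall b : B, forall eps : R, 0 < eps -> exists i0 : I,
         forall i, le i0 i ->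
           cs_norm (cs_mul (e i) b - b) < eps /\
           cs_norm (cs_mul b (e i) - b) < eps)].

End CStarDefs.

Definition ore_monoid (P : Type) (op : P -> P -> P) (e : P) : Prop :=
  [/\ (forall p q r, op p (op q r) = op (op p q) r),
      (forall p, op e p = p /\ op p e = p),
      (forall p q r, op p q = op p r -> q = r),
      (forall p q r, op q p = op r p -> q = r) &
      (forall s t, exists a b, op a s = op b t)].

Definition ore_le (P : Type) (op : P -> P -> P) (p r : P) : Prop :=
  exists s, r = op s p.

Definition is_group (G : Type) (mul : G -> G -> G) (inv : G -> G) (one : G) :=
  [/\ (forall x y z, mul x (mul y z) = mul (mul x y) z),
      (forall x, mul one x = x /\ mul x one = x) &
      (forall x, mul (inv x) x = one /\ mul x (inv x) = one)].

Definition enveloping_group (P : Type) (op : P -> P -> P) (e : P)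
    (G : Type) (mul : G -> G -> G) (inv : G -> G) (one : G) (j : P -> G) :=
  [/\ is_group mul inv one, injective j, j e = one,
      (forall p q, j (op p q) = mul (j p) (j q)) &
      (forall g, exists p q, g = mul (inv (j p)) (j q))].

From HB Require Import structures.
From mathcomp Require Import all_boot all_order all_algebra.
From mathcomp Require Import reals complex lra.
Set Implicit Arguments. Unset Strict Implicit. Unset Printing Implicit Defensive.
Import Order.TTheory GRing.Theory Num.Theory.
Local Open Scope ring_scope.

(* Every q_p = beta_p^-1(iota 1) is a projection. For p <= r = s p the Ore
   shift beta_{sp}^-1 iota alpha_s = beta_p^-1 iota rewrites q_p as the image
   of the projection alpha_s(1) <= 1 under beta_r^-1 iota, so q_p <= q_r.
   An element b is within eps of some c = beta_p^-1(iota x), and for r >= p the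
   same shift writes c inside the corner q_r B q_r, so q_r c = c = c q_r and
   ||q_r b - b|| <= 2 ||b - c||. *)

Lemma morph_subr (V W : zmodType) (f : V -> W) :
  {morph f : x y / x + y} -> {morph f : x y / x - y}.
Proof.
move=> fD x y.
have f0 : f 0 = 0 by apply: (addrI (f 0)); rewrite -fD !addr0.
have fN z : f (- z) = - f z by apply: (addrI (f z)); rewrite -fD !subrr.
by rewrite fD fN.
Qed.

Lemma normcN1 (R : realType) : ComplexField.Normc.normc (-1 : R[i]) = 1.
Proof. by rewrite /ComplexField.Normc.normc /= oppr0 expr0n addr0 sqrrN expr1n sqrtr1. Qed.

Section CStarAlgebra.
Variables (R : realType) (B : cstar R).

Lemma cs_mulBr (x y z : B) : cs_mul x (y - z) = cs_mul x y - cs_mul x z.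
Proof.
case: (cs_ax B) => [[_ _ mDr _] _ _ _ _].
exact: (@morph_subr _ _ (cs_mul x) (mDr x)).
Qed.

Lemma cs_mulBl (x y z : B) : cs_mul (y - z) x = cs_mul y x - cs_mul z x.
Proof.
case: (cs_ax B) => [[_ mDl _ _] _ _ _ _].
exact: (@morph_subr _ _ (fun a => cs_mul a x) (fun a b => mDl a b x) y z).
Qed.

Lemma cs_starB (x y : B) : cs_star (x - y) = cs_star x - cs_star y.
Proof. by case: (cs_ax B) => [_ [_ sD _ _] _ _ _]; exact: morph_subr. Qed.

Lemma cs_normN (x : B) : cs_norm (- x) = cs_norm x.
Proof.
case: (cs_ax B) => [_ _ [_ _ _ nZ _] _ _].
by rewrite -scaleN1r nZ normcN1 mul1r.
Qed.

Lemma cs_norm_mul_subl (q b c : B) :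
  cs_norm q <= 1 -> cs_mul q c = c ->
  cs_norm (cs_mul q b - b) <= 2 * cs_norm (b - c).
Proof.
case: (cs_ax B) => [_ _ [_ n_ge0 nD _ nM] _ _] nq qc.
have -> : cs_mul q b - b = cs_mul q (b - c) - (b - c).
  by rewrite cs_mulBr qc opprB addrA subrK.
apply: (le_trans (nD _ _)); rewrite cs_normN.
have : cs_norm q * cs_norm (b - c) <= cs_norm (b - c) by rewrite ler_piMl.
by have := nM q (b - c); lra.
Qed.

Lemma cs_norm_mul_subr (q b c : B) :
  cs_norm q <= 1 -> cs_mul c q = c ->
  cs_norm (cs_mul b q - b) <= 2 * cs_norm (b - c).
Proof.
case: (cs_ax B) => [_ _ [_ n_ge0 nD _ nM] _ _] nq cq.
have -> : cs_mul b q - b = cs_mul (b - c) q - (b - c).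
  by rewrite cs_mulBl cq opprB addrA subrK.
apply: (le_trans (nD _ _)); rewrite cs_normN.
have : cs_norm (b - c) * cs_norm q <= cs_norm (b - c) by rewrite mulrC ler_piMl.
by have := nM (b - c) q; lra.
Qed.

Definition cs_proj (q : B) : Prop := cs_star q = q /\ cs_mul q q = q.

Lemma cs_proj_pos (q : B) : cs_proj q -> cs_pos q.
Proof. by move=> [qS qI]; exists q; rewrite qS qI. Qed.

Lemma cs_proj_norm_le1 (q : B) : cs_proj q -> cs_norm q <= 1.
Proof.
case: (cs_ax B) => [_ _ [_ n_ge0 _ _ _] _ cstar_id] [qS qI].
have := cstar_id q; rewrite qS qI.
by have := n_ge0 q; nra.
Qed.

Lemma cs_proj_le (f q : B) :
  cs_proj f -> cs_proj q -> cs_mul q f = f -> cs_le f q.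
Proof.
case: (cs_ax B) => [_ [_ _ _ sM] _ _ _] [fS fI] [qS qI] qf.
have fq : cs_mul f q = f by rewrite -{1}fS -qS -sM qf fS.
by exists (q - f); rewrite cs_starB qS fS cs_mulBl !cs_mulBr qI qf fq fI subrr subr0.
Qed.

Lemma cs_unit_proj (one : B) :
  (forall x, cs_mul one x = x /\ cs_mul x one = x) -> cs_proj one.
Proof.
case: (cs_ax B) => [_ [sK _ _ sM] _ _ _] unit.
have oneS : cs_star one = one.
  by have := sM (cs_star one) one; rewrite (proj2 (unit _)) sK (proj2 (unit _)).
by split; last exact: (proj1 (unit _)).
Qed.

End CStarAlgebra.

Lemma starhom_comp (R : realType) (A B C : cstar R) (f : A -> B) (g : B -> C) :
  is_starhom f -> is_starhom g -> is_starhom (g \o f).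
Proof. by move=> [fD fZ fM fS] [gD gZ gM gS]; split=> * /=; rewrite ?fD ?fZ ?fM ?fS. Qed.

Lemma starhom_proj (R : realType) (A B : cstar R) (f : A -> B) (q : A) :
  is_starhom f -> cs_proj q -> cs_proj (f q).
Proof. by move=> [_ _ fM fS] [qS qI]; split; rewrite -?fS -?fM ?qS ?qI. Qed.

Lemma group_invM_mulr (G : Type) (mul : G -> G -> G) (inv : G -> G) (one : G) :
  is_group mul inv one -> forall a b, mul (inv (mul a b)) a = inv b.
Proof.
move=> [mA m1 mV] a b.
by rewrite -[LHS](proj2 (m1 _)) -(proj2 (mV b)) mA -(mA _ a b) (proj1 (mV _))
  (proj1 (m1 _)).
Qed.

Theorem lemma1p2 (R : realType) (A B : cstar R) (oneA : A)
  (P : Type) (op : P -> P -> P) (e : P)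
  (G : Type) (gmul : G -> G -> G) (ginv : G -> G) (g1 : G) (j : P -> G)
  (alpha : P -> A -> A) (beta : G -> B -> B) (iota : A -> B) :
  (* A is unital with unit oneA *)
  (forall x : A, cs_mul oneA x = x /\ cs_mul x oneA = x) ->
  (* P is an Ore semigroup with identity e, G its enveloping group *)
  ore_monoid op e ->
  enveloping_group op e gmul ginv g1 j ->
  (* alpha: action of P by injective *-endomorphisms, alpha_e = id *)
  (forall p, is_starhom (alpha p) /\ injective (alpha p)) ->
  (forall x, alpha e x = x) ->
  (forall p q x, alpha (op p q) x = alpha p (alpha q x)) ->
  (* (B, G, beta, iota): the minimal automorphic dilation *)
  is_starhom iota -> injective iota ->
  (forall g, is_starauto (beta g)) ->
  (forall x, beta g1 x = x) ->
  (forall g h x, beta (gmul g h) x = beta g (beta h x)) ->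
  (forall p x, beta (j p) (iota x) = iota (alpha p x)) ->
  (forall (b : B) (eps : R), 0 < eps ->
     exists p x, cs_norm (b - beta (ginv (j p)) (iota x)) < eps) ->
  (* conclusion: (u_p^* iota(1_A) u_p)_p = (beta_p^{-1}(iota(1_A)))_p is an
     approximate unit for B *)
  approx_unit (ore_le op) (fun p : P => beta (ginv (j p)) (iota oneA)).
Proof.
move=> unitA _ [Ggrp _ _ jM _] Halpha _ _ Hiota _ Hbeta _ betaM beta_iota dense.
have Hhom g : is_starhom (beta g \o iota) := starhom_comp Hiota (proj1 (Hbeta g)).
have homM g x y : beta g (iota (cs_mul x y))
                  = cs_mul (beta g (iota x)) (beta g (iota y)).
  by case: (Hhom g) => _ _ hM _; exact: hM.
have ore_shift s p y :
    beta (ginv (j (op s p))) (iota (alpha s y)) = beta (ginv (j p)) (iota y).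
  by rewrite -beta_iota -betaM jM (group_invM_mulr Ggrp).
have oneP := cs_unit_proj unitA.
have qP p : cs_proj (beta (ginv (j p)) (iota oneA)) := starhom_proj (Hhom _) oneP.
split.
- by move=> p; split; [exact: cs_proj_pos | exact: cs_proj_norm_le1].
- move=> p _ [s ->]; rewrite -(ore_shift s).
  apply: cs_proj_le (qP _) _.
    exact: starhom_proj (Hhom _) (starhom_proj (proj1 (Halpha s)) oneP).
  by rewrite -homM (proj1 (unitA _)).
- move=> b eps eps_gt0.
  have [p [x bc]] := dense b (eps / 2) (divr_gt0 eps_gt0 (ltr0Sn _ 1)).
  exists p => _ [s ->]; rewrite -(ore_shift s p) in bc.
  set q := beta _ (iota oneA); set c := beta _ (iota (alpha s x)) in bc.
  have qc : cs_mul q c = c by rewrite -homM (proj1 (unitA _)).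
  have cq : cs_mul c q = c by rewrite -homM (proj2 (unitA _)).
  have nq := cs_proj_norm_le1 (qP (op s p)).
  by split; [have := cs_norm_mul_subl b nq qc | have := cs_norm_mul_subr b nq cq]; lra.
Qed.
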